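(* Let $N,d\in\mathbb{N}^*$, $\alpha>0$, and for $i\neq j$ let $\Psi_{ij}:\mathbb{R}^{2dN}\to\mathbb{R}_+$ be non-negative, bounded and locally Lipschitz. Let $(x_i(t),v_i(t))_{i\in\{1,\dots,N\},t\ge0}$ be a solution on $\mathbb{R}_+$ of $$\frac{dx_i}{dt}=v_i,\qquad \frac{dv_i}{dt}=\alpha\sum_{j=1}^NQ_t(i,j)(v_j-v_i),$$ where $Q_t(i,j)=\Psi_{ij}((x_1(t),v_1(t)),\dots,(x_N(t),v_N(t)))$ for $i\ne j$ and $Q_t(i,i)=-\sum_{j\ne i}Q_t(i,j)$. Let $(P^*_{s,t})_{0\le s\le t}$ be the solution on $\mathbb{R}_+$ of $$P^*_{t,t}=I,\qquad \partial_tP^*_{s,t}=\alpha Q_tP^*_{s,t},\qquad \partial_sP^*_{s,t}=-\alpha P^*_{s,t}Q_s,$$ and define the Dobrushin ergodicity coefficient $\mu(P^*_{s,t})=\inf_{i,j}\sum_{k=1}^N P^*_{s,t}(i,k)\wedge P^*_{s,t}(j,k)$. Then for all $0\le s\le t$, $$V(t)\le\big(1-\mu(P^*_{s,t})\big)V(s),$$ where $V(t)=\sup_{i,j}\|v_i(t)-v_j(t)\|_2$.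
   Context: $a\wedge b=\min(a,b)$; $\|\cdot\|_2$ is the Euclidean norm; $I$ is the $N\times N$ identity matrix. The matrices $P^*_{s,t}$ are stochastic matrices. *)

From mathcomp Require Import all_boot all_order all_algebra.
From mathcomp Require Import all_classical all_reals all_analysis.
Set Implicit Arguments. Unset Strict Implicit. Unset Printing Implicit Defensive.
Import Order.TTheory GRing.Theory Num.Theory.
Import numFieldNormedType.Exports.
Local Open Scope ring_scope.
Local Open Scope classical_set_scope.

(* A configuration of N particles in R^d: positions and velocities,
   i.e. a point of R^{2dN}. *)
Definition config (R : realType) (N d : nat) :=
  (('I_N -> 'I_d -> R) * ('I_N -> 'I_d -> R))%type.

(* max-norm distance on R^{2dN} (all norms are equivalent in finite dim) *)
Definition cdist (R : realType) (N d : nat) (z1 z2 : config R N d) : R :=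
  \big[Num.max/0]_(i < N) \big[Num.max/0]_(k < d)
     Num.max `|z1.1 i k - z2.1 i k| `|z1.2 i k - z2.2 i k|.

Definition locally_lipschitz (R : realType) (N d : nat) (f : config R N d -> R) :=
  forall z, exists r : R, exists L : R, 0 < r /\
    forall z1 z2, cdist z z1 < r -> cdist z z2 < r ->
      `|f z1 - f z2| <= L * cdist z1 z2.

Definition sup_bounded (R : realType) (N d : nat) (f : config R N d -> R) :=
  exists M : R, forall z, `|f z| <= M.

Definition Qmat (R : realType) (N d : nat)
  (Psi : 'I_N -> 'I_N -> config R N d -> R) (z : config R N d) : 'M[R]_N :=
  \matrix_(i, j) (if i != j then Psi i j z
                  else - \sum_(l < N | l != i) Psi i l z).

Definition dobrushin (R : realType) (N : nat) (P : 'M[R]_N) : R :=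
  inf [set (\sum_(k < N) Num.min (P i k) (P j k)) | i in [set: 'I_N] & j in [set: 'I_N]].

Definition norm2 (R : realType) (d : nat) (u : 'I_d -> R) : R :=
  Num.sqrt (\sum_(k < d) u k ^+ 2).

Definition velocity_diameter (R : realType) (N d : nat) (v : 'I_N -> 'I_d -> R) : R :=
  sup [set norm2 (fun k => v i k - v j k) | i in [set: 'I_N] & j in [set: 'I_N]].

From mathcomp Require Import all_boot all_order all_algebra.
From mathcomp Require Import all_classical all_reals all_analysis.
From mathcomp Require Import ring.
Set Implicit Arguments. Unset Strict Implicit. Unset Printing Implicit Defensive.
Import Order.TTheory GRing.Theory Num.Theory.
Import numFieldNormedType.Exports.
Local Open Scope ring_scope.
Local Open Scope classical_set_scope.

(* Since the rows of Q_u sum to zero, the velocity equation reads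
   dv/du = alpha Q_u v, so the backward equation makes u |-> P*_{u,t} v(u)
   constant on [s, t]: v_i(t) = sum_k P*_{s,t}(i,k) v_k(s), and (taking v = 1)
   the rows of P*_{s,t} sum to 1.  For any matrix M with unit row sums, rows
   i and j split as M_i = m + p and M_j = m + q with m = min(M_i, M_j) and
   p, q >= 0 of equal mass theta = 1 - sum_k m_k; then
   theta ((M a)_i - (M a)_j) = sum_{k,l} p_k q_l (a_k - a_l), whose norm is at
   most theta^2 times the diameter of a.  No positivity of P* is needed. *)

Section EuclideanNorm.
Variables (R : realType) (d : nat).
Implicit Types u w : 'I_d -> R.

Lemma sumr_sqr_ge0 u : 0 <= \sum_(k < d) u k ^+ 2.
Proof. by apply: sumr_ge0 => k _; exact: sqr_ge0. Qed.

Lemma norm2_ge0 u : 0 <= norm2 u.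
Proof. exact: sqrtr_ge0. Qed.

Lemma norm2_0 : norm2 (fun _ : 'I_d => 0 : R) = 0.
Proof. by rewrite /norm2 big1 ?sqrtr0 // => k _; rewrite expr0n. Qed.

Lemma Lagrange_identity u w :
  \sum_(k < d) \sum_(l < d) (u k * w l - u l * w k) ^+ 2 =
  2 * ((\sum_(k < d) u k ^+ 2) * (\sum_(k < d) w k ^+ 2)
       - (\sum_(k < d) u k * w k) ^+ 2).
Proof.
set A := \sum_(k < d) u k ^+ 2; set B := \sum_(k < d) w k ^+ 2.
set C := \sum_(k < d) u k * w k.
have expand k l : (u k * w l - u l * w k) ^+ 2 =
    u k ^+ 2 * w l ^+ 2 + w k ^+ 2 * u l ^+ 2 - 2 * (u k * w k * (u l * w l)).
  by ring.
under eq_bigr do under eq_bigr do rewrite expand.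
under eq_bigr do rewrite sumrB big_split /= -!mulr_sumr -/A -/B -/C.
rewrite sumrB big_split /= -!mulr_suml -mulr_sumr -mulr_suml -/A -/B -/C; ring.
Qed.

Lemma Cauchy_Schwarz_norm2 u w : \sum_(k < d) u k * w k <= norm2 u * norm2 w.
Proof.
have le_sqr : (\sum_(k < d) u k * w k) ^+ 2 <=
    (\sum_(k < d) u k ^+ 2) * (\sum_(k < d) w k ^+ 2).
  rewrite -subr_ge0 -(pmulr_rge0 _ (ltr0Sn R 1)) -Lagrange_identity.
  by apply: sumr_ge0 => k _; apply: sumr_ge0 => l _; exact: sqr_ge0.
rewrite /norm2 -sqrtrM ?sumr_sqr_ge0 //.
by apply: le_trans (ler_norm _) _; rewrite -sqrtr_sqr ler_wsqrtr.
Qed.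

Lemma norm2D u w : norm2 (fun k => u k + w k) <= norm2 u + norm2 w.
Proof.
rewrite -(ger0_norm (addr_ge0 (norm2_ge0 u) (norm2_ge0 w))) -sqrtr_sqr.
apply: ler_wsqrtr.
have -> : \sum_(k < d) (u k + w k) ^+ 2 = \sum_(k < d) u k ^+ 2
    + 2 * \sum_(k < d) u k * w k + \sum_(k < d) w k ^+ 2.
  by rewrite mulr_sumr -!big_split /=; apply: eq_bigr => k _; ring.
rewrite sqrrD /norm2 !sqr_sqrtr ?sumr_sqr_ge0 // mulr2n -mulr2n -mulr_natl.
by rewrite lerD2r lerD2l ler_pM2l ?Cauchy_Schwarz_norm2.
Qed.

Lemma norm2Z (r : R) u : 0 <= r -> norm2 (fun k => r * u k) = r * norm2 u.
Proof.
move=> r_ge0; rewrite /norm2.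
under eq_bigr do rewrite exprMn.
by rewrite -mulr_sumr sqrtrM ?sqr_ge0 // sqrtr_sqr ger0_norm.
Qed.

Lemma norm2_sum (I : Type) (r : seq I) (F : I -> 'I_d -> R) :
  norm2 (fun k => \sum_(m <- r) F m k) <= \sum_(m <- r) norm2 (F m).
Proof.
elim: r => [|a r IHr].
  by under eq_fun do rewrite big_nil; rewrite big_nil norm2_0.
under eq_fun do rewrite big_cons.
by rewrite big_cons; apply: le_trans (norm2D _ _) _; exact: lerD.
Qed.

End EuclideanNorm.

Section FiniteImage.
Variables (R : realType) (T : finType) (f : T -> T -> R).

Let S := [set f i j | i in [set: T] & j in [set: T]].

Lemma norm_le_sum2 i j : `|f i j| <= \sum_i' \sum_j' `|f i' j'|.
Proof.
have le_sum (F : T -> R) x : (forall y, 0 <= F y) -> F x <= \sum_y F y.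
  by move=> F_ge0; rewrite (bigD1 x) //= lerDl sumr_ge0.
apply: le_trans (le_sum _ j (fun _ => normr_ge0 _)) (le_sum _ i _) => i'.
exact: sumr_ge0.
Qed.

Lemma image2_has_ubound : has_ubound S.
Proof.
exists (\sum_i \sum_j `|f i j|) => _ [i _ [j _ <-]].
exact: le_trans (ler_norm _) (norm_le_sum2 i j).
Qed.

Lemma image2_has_lbound : has_lbound S.
Proof.
exists (- \sum_i \sum_j `|f i j|) => _ [i _ [j _ <-]].
by rewrite lerNl; apply: le_trans (norm_le_sum2 i j); rewrite -normrN ler_norm.
Qed.

End FiniteImage.

Lemma velocity_diameter_ge (R : realType) (N d : nat)
    (v : 'I_N -> 'I_d -> R) i j :
  norm2 (fun k => v i k - v j k) <= velocity_diameter v.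
Proof.
by apply: ub_le_sup; [exact: image2_has_ubound | exists i => //; exists j].
Qed.

Lemma velocity_diameter_ge0 (R : realType) (N d : nat)
    (v : 'I_N -> 'I_d -> R) :
  (0 < N)%N -> 0 <= velocity_diameter v.
Proof.
move=> N_gt0; pose i0 := Ordinal N_gt0.
exact: le_trans (norm2_ge0 _) (velocity_diameter_ge v i0 i0).
Qed.

Lemma velocity_diameter_le (R : realType) (N d : nat)
    (v : 'I_N -> 'I_d -> R) (c : R) :
  (0 < N)%N -> (forall i j, norm2 (fun k => v i k - v j k) <= c) ->
  velocity_diameter v <= c.
Proof.
move=> N_gt0 le_c; pose i0 := Ordinal N_gt0.
apply: ge_sup => [|_ [i _ [j _ <-]]] //.
by exists (norm2 (fun k => v i0 k - v i0 k)); exists i0 => //; exists i0.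
Qed.

Lemma dobrushin_le (R : realType) (N : nat) (M : 'M[R]_N) i j :
  dobrushin M <= \sum_(k < N) Num.min (M i k) (M j k).
Proof.
by apply: ge_inf; [exact: image2_has_lbound | exists i => //; exists j].
Qed.

Lemma Qmat_row_sum0 (R : realType) (N d : nat)
    (Psi : 'I_N -> 'I_N -> config R N d -> R) z i :
  \sum_(j < N) Qmat Psi z i j = 0.
Proof.
rewrite (bigD1 i) //= mxE eqxx addrC; apply/eqP; rewrite subr_eq0; apply/eqP.
by apply: eq_bigr => j ji; rewrite mxE eq_sym ji.
Qed.

Lemma sum_mulr_diff_row0 (R : realType) (N : nat) (Q : 'M[R]_N) (w : 'I_N -> R) i :
  \sum_(j < N) Q i j = 0 ->
  \sum_(j < N) Q i j * (w j - w i) = \sum_(j < N) Q i j * w j.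
Proof.
move=> Q_row0; under eq_bigr do rewrite mulrBr.
by rewrite sumrB -mulr_suml Q_row0 mul0r subr0.
Qed.

Section BackwardKolmogorov.
Variables (R : realType) (N : nat) (G : R -> 'M[R]_N) (P : R -> R -> 'M[R]_N)
  (s t : R).
Hypothesis le_st : s <= t.
Hypothesis Ptt : P t t = 1%:M.
Hypothesis P_cont : forall i j, {within `[s, t], continuous (fun u => P u t i j)}.
Hypothesis P_backward : forall u, s < u -> u < t -> forall i j,
  is_derive u 1 (fun y => P y t i j) (- (P u t *m G u) i j).

Lemma backward_transport (w : R -> 'I_N -> R) :
  (forall k, {within `[s, t], continuous (fun u => w u k)}) ->
  (forall u, s < u -> u < t -> forall k,
     is_derive u 1 (fun y => w y k) (\sum_(j < N) G u k j * w u j)) ->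
  forall i, w t i = \sum_(k < N) P s t i k * w s k.
Proof.
move=> w_cont w_ode i.
pose g u := \sum_(k < N) P u t i k * w u k.
have g_t : g t = w t i.
  rewrite /g Ptt (bigD1 i) //= big1 => [|k ki].
    by rewrite mxE eqxx mul1r addr0.
  by rewrite mxE eq_sym (negbTE ki) mul0r.
have g_deriv0 u : u \in `]s, t[%R -> is_derive u 1 g 0.
  rewrite in_itv /= => /andP[su ut].
  have -> : g = \sum_(k < N) (fun y => P y t i k * w y k) by rewrite fct_sumE.
  apply: is_derive_eq; first by apply: is_derive_sum => k; apply: is_deriveM;
    [exact: P_backward | exact: w_ode].
  under eq_bigr do rewrite -![_ *: _]/(_ * _) mulr_sumr mxE mulrN mulr_sumr.
  rewrite big_split /= [X in _ + X]sumrN [X in _ - X]exchange_big /=.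
  by rewrite -sumrB big1 // => k _; rewrite -sumrB big1 // => j _; ring.
have g_cont : {within `[s, t], continuous g}.
  move=> y; apply: (cvg_big (op := +%R) (x0 := 0) (P := xpredT) add_continuous
      (Ff := fun k u => P u t i k * w u k)); first exact: nbhs_subspace_filter.
  move=> k _; apply: cvgM; first exact: nbhs_subspace_filter.
    exact: P_cont.
  exact: w_cont.
have [c _ g_eq] := MVT_segment le_st g_deriv0 g_cont.
by apply/eqP; rewrite -g_t -subr_eq0 g_eq mul0r.
Qed.

Lemma backward_row_sum1 : (forall u i, \sum_(j < N) G u i j = 0) ->
  forall i, \sum_(k < N) P s t i k = 1.
Proof.
move=> G_row0 i; under eq_bigr do rewrite -[P s t i _]mulr1.
symmetry; apply: (backward_transport (w := fun _ _ => 1)) => [k|u _ _ k].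
  by apply: continuous_subspaceT => y; exact: cst_continuous.
under eq_bigr do rewrite mulr1; rewrite G_row0; exact: is_derive_cst.
Qed.

End BackwardKolmogorov.

Section DobrushinContraction.
Variables (R : realType) (N d : nat) (a : 'I_N -> 'I_d -> R) (D : R).
Hypothesis diam_a : forall k l, norm2 (fun c => a k c - a l c) <= D.

Lemma norm2_barycenter_diff_le (p q : 'I_N -> R) (theta : R) :
  (forall k, 0 <= p k) -> (forall k, 0 <= q k) ->
  \sum_(k < N) p k = theta -> \sum_(k < N) q k = theta ->
  norm2 (fun c => \sum_(k < N) p k * a k c - \sum_(k < N) q k * a k c)
    <= theta * D.
Proof.
move=> p_ge0 q_ge0 sum_p sum_q.
have theta_ge0 : 0 <= theta by rewrite -sum_p sumr_ge0.
have [theta0|theta_neq0] := eqVneq theta 0.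
  have p0 k : p k = 0 := psumr_eq0P (fun k _ => p_ge0 k) (etrans sum_p theta0) isT.
  have q0 k : q k = 0 := psumr_eq0P (fun k _ => q_ge0 k) (etrans sum_q theta0) isT.
  have -> : (fun c => \sum_(k < N) p k * a k c - \sum_(k < N) q k * a k c)
      = fun=> 0.
    by apply: funext => c; rewrite !big1 ?subrr // => k _; rewrite ?p0 ?q0 mul0r.
  by rewrite norm2_0 theta0 mul0r.
have theta_gt0 : 0 < theta by rewrite lt_def theta_neq0.
have coupling c : theta * (\sum_(k < N) p k * a k c - \sum_(k < N) q k * a k c) =
    \sum_(k < N) \sum_(l < N) (p k * q l) * (a k c - a l c).
  under [RHS]eq_bigr do under eq_bigr do rewrite mulrBr.
  under [RHS]eq_bigr do rewrite sumrB.
  rewrite sumrB [X in _ = _ - X]exchange_big mulrBr; congr (_ - _).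
    rewrite -sum_q mulr_sumr; apply: eq_bigr => k _.
    by rewrite mulr_suml; apply: eq_bigr => l _; ring.
  rewrite -sum_p mulr_sumr; apply: eq_bigr => l _.
  by rewrite mulr_suml; apply: eq_bigr => k _; ring.
rewrite -(ler_pM2l theta_gt0) -norm2Z //.
under eq_fun do rewrite coupling.
apply: le_trans (norm2_sum _ _) _.
apply: le_trans (ler_sum _ (fun k _ => norm2_sum _ _)) _.
rewrite -{1}sum_p mulr_suml; apply: ler_sum => k _.
rewrite -sum_q mulr_suml mulr_sumr; apply: ler_sum => l _.
by rewrite norm2Z ?mulr_ge0 // -mulrA !ler_wpM2l ?diam_a.
Qed.

Lemma dobrushin_pair_contraction (M : 'M[R]_N) (b : 'I_N -> 'I_d -> R) i j :
  (forall i, \sum_(k < N) M i k = 1) ->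
  (forall i c, b i c = \sum_(k < N) M i k * a k c) ->
  norm2 (fun c => b i c - b j c)
    <= (1 - \sum_(k < N) Num.min (M i k) (M j k)) * D.
Proof.
move=> M_row1 b_def.
pose m k := Num.min (M i k) (M j k).
have diff c : b i c - b j c =
    \sum_(k < N) (M i k - m k) * a k c - \sum_(k < N) (M j k - m k) * a k c.
  by rewrite !b_def -!sumrB; apply: eq_bigr => k _; ring.
under eq_fun do rewrite diff.
apply: norm2_barycenter_diff_le => [k|k||]; rewrite ?sumrB ?M_row1 //.
  by rewrite subr_ge0 ge_min lexx.
by rewrite subr_ge0 ge_min lexx orbT.
Qed.

End DobrushinContraction.

Theorem corollary2p8 (R : realType) (N d : nat) (alpha : R)
  (Psi : 'I_N -> 'I_N -> config R N d -> R)
  (x v : R -> 'I_N -> 'I_d -> R)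
  (P : R -> R -> 'M[R]_N) :
  (0 < N)%N -> (0 < d)%N -> 0 < alpha ->
  (* Psi_ij non-negative, bounded, locally Lipschitz for i <> j *)
  (forall i j, i != j -> forall z, 0 <= Psi i j z) ->
  (forall i j, i != j -> sup_bounded (Psi i j)) ->
  (forall i j, i != j -> locally_lipschitz (Psi i j)) ->
  (* (x, v) is a solution on R_+ of the ODE system *)
  (forall i k, {within `[0, +oo[, continuous (fun t => x t i k)}) ->
  (forall i k, {within `[0, +oo[, continuous (fun t => v t i k)}) ->
  (forall t : R, 0 < t -> forall i k,
     is_derive t 1 (fun s => x s i k) (v t i k)) ->
  (forall t : R, 0 < t -> forall i k,
     is_derive t 1 (fun s => v s i k)
       (alpha * \sum_(j < N) (Qmat Psi (x t, v t)) i j * (v t j k - v t i k))) ->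
  (* P* is the solution of the forward/backward Kolmogorov equations *)
  (forall t : R, 0 <= t -> P t t = 1%:M) ->
  (forall s : R, 0 <= s -> forall i j,
     {within `[s, +oo[, continuous (fun t => P s t i j)}) ->
  (forall s t : R, 0 <= s -> s < t -> forall i j,
     is_derive t 1 (fun u => P s u i j)
       (alpha * ((Qmat Psi (x t, v t)) *m P s t) i j)) ->
  (forall t : R, 0 <= t -> forall i j,
     {within `[0, t], continuous (fun s => P s t i j)}) ->
  (forall s t : R, 0 < s -> s < t -> forall i j,
     is_derive s 1 (fun u => P u t i j)
       (- alpha * (P s t *m Qmat Psi (x s, v s)) i j)) ->
  forall s t : R, 0 <= s -> s <= t ->
    velocity_diameter (v t) <= (1 - dobrushin (P s t)) * velocity_diameter (v s).
Proof.
move=> N_gt0 _ _ _ _ _ _ v_cont _ v_ode Ptt _ _ P_cont P_backward s t s_ge0 le_st.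
have t_ge0 : 0 <= t := le_trans s_ge0 le_st.
pose Q u := Qmat Psi (x u, v u); pose G u := alpha *: Q u.
have G_row0 u i : \sum_(j < N) G u i j = 0.
  by under eq_bigr do rewrite mxE; rewrite -mulr_sumr Qmat_row_sum0 mulr0.
have P_cont_st i j : {within `[s, t], continuous (fun u => P u t i j)}.
  apply: continuous_subspaceW (P_cont t t_ge0 i j).
  by apply: subset_itvr; rewrite bnd_simp.
have P_backward_st u : s < u -> u < t -> forall i j,
    is_derive u 1 (fun y => P y t i j) (- (P u t *m G u) i j).
  move=> su ut i j; rewrite -scalemxAr mxE -mulNr.
  exact: P_backward (le_lt_trans s_ge0 su) ut i j.
have P_row1 := backward_row_sum1 le_st (Ptt t t_ge0) P_cont_st P_backward_st G_row0.
have v_transport i c : v t i c = \sum_(k < N) P s t i k * v s k c.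
  apply: (backward_transport le_st (Ptt t t_ge0) P_cont_st P_backward_st
    (w := fun u k => v u k c)) => [k|u su ut k].
    apply: continuous_subspaceW (v_cont k c).
    by apply: subset_itv; rewrite bnd_simp.
  have -> : \sum_(j < N) G u k j * v u j c
      = alpha * \sum_(j < N) Q u k j * v u j c.
    by rewrite mulr_sumr; apply: eq_bigr => j _; rewrite mxE mulrA.
  rewrite -sum_mulr_diff_row0 ?Qmat_row_sum0 //; exact: v_ode (le_lt_trans s_ge0 su) k c.
apply: velocity_diameter_le => // i j.
have := dobrushin_pair_contraction (velocity_diameter_ge (v s)) i j P_row1 v_transport.
move/le_trans; apply.
by rewrite ler_wpM2r ?velocity_diameter_ge0 // lerD2l lerN2 dobrushin_le.
Qed.
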